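(* Let $T$ be a ranked monad. Every open $w\in\mathcal{O}(\mathrm{LB}_1T)$ can be written as $w=\bigvee_{m\in T1}\hat m\wedge\mathrm{const}_{w(m)}$, where $\hat m:=\lambda n.[\![m\sim n]\!]$; consequently the frame $\mathcal{O}(\mathrm{LB}_1T)$ is generated by the opens $[m\,|\,b]:=\lambda n.[\![m\sim n]\!]\wedge[b]$ for $m\in T1$ and $b\in T2$.
   Context: Monads on $\mathbf{Set}$: sets $TA$, $\mathrm{return}$, $\mathbin{\gg\!=}\colon TA\times(TB)^A\to TB$ with monad laws; $t\gg s:=t\mathbin{\gg\!=}\lambda a.s$; ranked of rank $\kappa$: every $t\in TA$ is $t'\mathbin{\gg\!=}\lambda i.\mathrm{return}\,f(i)$ with $t'\in TI$, $|I|<\kappa$. $1=\{*\}$, $2=\{0,1\}$. $\mathrm{LB}_0T$: the locale whose frame is presented by generators $[b]$ ($b\in T2$) with relations $[t\mapsto a]\wedge[t\mapsto a']=\bot$ ($a\ne a'$), $[t\gg\mathrm{return}\,a\mapsto a]=\top$, $[t\mathbin{\gg\!=}u\mapsto b]=\bigvee_a[t\mapsto a]\wedge[t\gg u(a)\mapsto b]$, $[t\mapsto a]:=[t\mathbin{\gg\!=}\lambda a'.\mathrm{return}(\delta_a(a'))]$, $\delta_a(a')=1$ iff $a'=a$. Trace equivalence: $[\![m\sim_1m']\!]=\bigvee\{[t\mapsto a]:|A|\le\kappa,t\in TA,u,u'\colon A\to T1,u(a)=u'(a),m=t\mathbin{\gg\!=}u,m'=t\mathbin{\gg\!=}u'\}$;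 for $k\ge2$, $[\![m_1\sim_km_k]\!]=\bigvee\{\bigwedge_{i=1}^{k-1}[\![m_i\sim_1m_{i+1}]\!]:m_2,\dots,m_{k-1}\in T1\}$; $[\![m\sim m']\!]=\bigvee_{k\ge1}[\![m\sim_km']\!]$; $m\sim_bm'$ iff $b\le[\![m\sim m']\!]$ ($b$ complemented). The locale of transitions $\mathrm{LB}_1T$ has frame the set of functions $w\colon T1\to\mathcal{O}(\mathrm{LB}_0T)$ with $b\wedge w(m_1)=b\wedge w(m_2)$ whenever $b$ complemented and $m_1\sim_bm_2$, ordered pointwise (with pointwise meets); $\mathrm{const}_u$ is the constant function with value $u$. *)

From Stdlib Require Import List ClassicalEpsilon.
Set Implicit Arguments.

Record Monad := {
  M :> Type -> Type;
  ret : forall A : Type, A -> M A;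
  bind : forall A B : Type, M A -> (A -> M B) -> M B;
  bind_ret_l : forall (A B : Type) (a : A) (f : A -> M B), bind (ret a) f = f a;
  bind_ret_r : forall (A : Type) (t : M A), bind t (@ret A) = t;
  bind_assoc : forall (A B C : Type) (t : M A) (f : A -> M B) (g : B -> M C),
      bind (bind t f) g = bind t (fun a => bind (f a) g)
}.
Arguments ret {m A}.
Arguments bind {m A B}.

Definition then_ (T : Monad) (A B : Type) (t : T A) (s : T B) : T B :=
  bind t (fun _ => s).
Arguments then_ {T A B}.

(* cardinal comparisons; a cardinal kappa is represented by a type K with |K| = kappa *)
Definition card_le (A K : Type) : Prop := exists f : A -> K, forall x y, f x = f y -> x = y.
Definition card_lt (A K : Type) : Prop := card_le A K /\ ~ card_le K A.

Definition ranked_of_rank (T : Monad) (K : Type) : Prop :=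
  forall (A : Type) (t : T A), exists (I : Type) (t' : T I) (f : I -> A),
    card_lt I K /\ t = bind t' (fun i => ret (f i)).

Record Frame := {
  fcar :> Type;
  fle : fcar -> fcar -> Prop;
  fmeet : fcar -> fcar -> fcar;
  ftop : fcar;
  fsup : (fcar -> Prop) -> fcar;
  fle_refl : forall x, fle x x;
  fle_trans : forall x y z, fle x y -> fle y z -> fle x z;
  fle_antisym : forall x y, fle x y -> fle y x -> x = y;
  fmeet_l : forall x y, fle (fmeet x y) x;
  fmeet_r : forall x y, fle (fmeet x y) y;
  fmeet_glb : forall x y z, fle z x -> fle z y -> fle z (fmeet x y);
  ftop_max : forall x, fle x ftop;
  fsup_ub : forall (P : fcar -> Prop) x, P x -> fle x (fsup P);
  fsup_lub : forall (P : fcar -> Prop) z, (forall x, P x -> fle x z) -> fle (fsup P) z;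
  fdistr : forall a (P : fcar -> Prop),
      fmeet a (fsup P) = fsup (fun x => exists y, P y /\ x = fmeet a y)
}.
Arguments fle {f}.
Arguments fmeet {f}.
Arguments ftop {f}.
Arguments fsup {f}.

Definition fbot (F : Frame) : F := fsup (fun _ => False).
Arguments fbot {F}.
Definition fjoin (F : Frame) (x y : F) : F := fsup (fun z => z = x \/ z = y).
Arguments fjoin {F}.

Definition complemented {F : Frame} (b : F) : Prop :=
  exists c : F, fmeet b c = fbot /\ fjoin b c = ftop.

Definition frame_hom {F G : Frame} (phi : F -> G) : Prop :=
  (forall x y, phi (fmeet x y) = fmeet (phi x) (phi y)) /\
  phi ftop = ftop /\
  (forall P : F -> Prop, phi (fsup P) = fsup (fun y => exists x, P x /\ y = phi x)).

(* delta_a(a') = 1 iff a' = a ; 2 = bool, 1 = true, 1 = unit *)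
Definition delta (A : Type) (a a' : A) : bool :=
  if excluded_middle_informative (a' = a) then true else false.

(* the element of T2 whose generator is [t |-> a] *)
Definition maps_to (T : Monad) (A : Type) (t : T A) (a : A) : T bool :=
  bind t (fun a' => ret (delta a a')).
Arguments maps_to {T A}.

Definition LB0_relations {T : Monad} {G : Frame} (h : T bool -> G) : Prop :=
  (forall (A : Type) (t : T A) (a a' : A), a <> a' ->
      fmeet (h (maps_to t a)) (h (maps_to t a')) = fbot) /\
  (forall (A B : Type) (t : T A) (a : B), h (maps_to (then_ t (ret a)) a) = ftop) /\
  (forall (A B : Type) (t : T A) (u : A -> T B) (b : B),
      h (maps_to (bind t u) b) =
      fsup (fun x => exists a : A,
              x = fmeet (h (maps_to t a)) (h (maps_to (then_ t (u a)) b)))).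

(* (F, g) is the frame presented by generators [b] := g b (b in T2) and the
   relations above, characterised by its universal property. *)
Definition is_LB0 {T : Monad} {F : Frame} (g : T bool -> F) : Prop :=
  LB0_relations g /\
  forall (G : Frame) (h : T bool -> G), LB0_relations h ->
    exists phi : F -> G, frame_hom phi /\ (forall b, phi (g b) = h b) /\
      forall psi : F -> G, frame_hom psi -> (forall b, psi (g b) = h b) ->
        forall x, psi x = phi x.

Section Trace.
Variables (T : Monad) (K : Type) (F : Frame) (g : T bool -> F).

Definition sim1 (m m' : T unit) : F :=
  fsup (fun x => exists (A : Type) (t : T A) (u u' : A -> T unit) (a : A),
          card_le A K /\ u a = u' a /\ m = bind t u /\ m' = bind t u' /\
          x = g (maps_to t a)).

Fixpoint chain_meet (m : T unit) (l : list (T unit)) (m' : T unit) : F :=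
  match l with
  | nil => sim1 m m'
  | x :: l' => fmeet (sim1 m x) (chain_meet x l' m')
  end.

Definition simk (m m' : T unit) (k : nat) : F :=
  match k with
  | 1 => sim1 m m'
  | _ => fsup (fun x => exists l : list (T unit), length l = k - 2 /\ x = chain_meet m l m')
  end.

Definition sim (m m' : T unit) : F :=
  fsup (fun x => exists k : nat, 1 <= k /\ x = simk m m' k).

Definition sim_b (b : F) (m m' : T unit) : Prop := complemented b /\ fle b (sim m m').

Definition isLB1 (w : T unit -> F) : Prop :=
  forall (b : F) (m1 m2 : T unit), complemented b -> sim_b b m1 m2 ->
    fmeet b (w m1) = fmeet b (w m2).

Definition le1 (v w : T unit -> F) : Prop := forall n, fle (v n) (w n).
Definition meet1 (v w : T unit -> F) : T unit -> F := fun n => fmeet (v n) (w n).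
Definition const (u : F) : T unit -> F := fun _ => u.

Definition is_join1 (P : (T unit -> F) -> Prop) (v : T unit -> F) : Prop :=
  isLB1 v /\ (forall x, P x -> le1 x v) /\
  (forall u, isLB1 u -> (forall x, P x -> le1 x u) -> le1 v u).

Definition hat (m : T unit) : T unit -> F := fun n => sim m n.

Definition gen1 (m : T unit) (b : T bool) : T unit -> F := meet1 (hat m) (const (g b)).

Definition generates1 (Gens : (T unit -> F) -> Prop) : Prop :=
  forall S : (T unit -> F) -> Prop,
    (forall x, Gens x -> S x) ->
    S (const ftop) ->
    (forall v1 v2, isLB1 v1 -> isLB1 v2 -> S v1 -> S v2 -> S (meet1 v1 v2)) ->
    (forall (P : (T unit -> F) -> Prop) v,
        (forall x, P x -> isLB1 x /\ S x) -> is_join1 P v -> S v) ->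
    forall w, isLB1 w -> S w.
End Trace.

Arguments sim1 {T} K {F} g.
Arguments chain_meet {T} K {F} g.
Arguments simk {T} K {F} g.
Arguments sim {T} K {F} g.
Arguments sim_b {T} K {F} g.
Arguments isLB1 {T} K {F} g.
Arguments le1 {T F}.
Arguments meet1 {T F}.
Arguments const {T F}.
Arguments is_join1 {T} K {F} g.
Arguments hat {T} K {F} g.
Arguments gen1 {T} K {F} g.
Arguments generates1 {T} K {F} g.

(* Trace equivalence [[m ~ n]] behaves like a frame-valued equivalence relation: it is
   symmetric and transitive by reversing and concatenating chains, and reflexive because
   [ret tt |-> tt] = top; the latter witness has index type unit, which must have size at
   most |K|, and this nonemptiness of K is all that the rank hypothesis is needed for.
   Every open w of LB_1 T is transported along it, [[m ~ n]] /\ w(m) <= w(n), because each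
   generator [t |-> a] of [[m ~_1 n]] is complemented and witnesses m ~_[t |-> a] n.
   Taking m = n in the join gives w(n) <= \/_m [[m ~ n]] /\ w(m) <= w(n).  For generation
   it then suffices that every hat m /\ const c lies in a given subframe S; the c with this
   property form a subframe of O(LB_0 T) containing the generators [b], hence are all of
   it by the uniqueness part of the universal property of the presentation. *)
From Stdlib Require Import List Classical ProofIrrelevance FunctionalExtensionality.
Set Implicit Arguments.

Section FrameFacts.
Variable F : Frame.
Implicit Types (a b x y z : F) (P : F -> Prop).

Lemma fsup_ext P P' : (forall x, P x <-> P' x) -> fsup P = fsup P'.
Proof.
  intros H; apply fle_antisym; apply fsup_lub; intros x Hx; apply fsup_ub, H, Hx.
Qed.

Lemma fmeet_comm a b : fmeet a b = fmeet b a.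
Proof. apply fle_antisym; apply fmeet_glb; (apply fmeet_l || apply fmeet_r). Qed.

Lemma fmeet_mono a a' b b' : fle a a' -> fle b b' -> fle (fmeet a b) (fmeet a' b').
Proof.
  intros Ha Hb; apply fmeet_glb.
  - eapply fle_trans; [apply fmeet_l | exact Ha].
  - eapply fle_trans; [apply fmeet_r | exact Hb].
Qed.

Lemma fmeet_assoc a b c : fmeet a (fmeet b c) = fmeet (fmeet a b) c.
Proof.
  apply fle_antisym; apply fmeet_glb.
  - apply fmeet_mono; [apply fle_refl | apply fmeet_l].
  - eapply fle_trans; apply fmeet_r.
  - eapply fle_trans; apply fmeet_l.
  - apply fmeet_mono; [apply fmeet_r | apply fle_refl].
Qed.

Lemma fmeet_meetDl a x y : fmeet a (fmeet x y) = fmeet (fmeet a x) (fmeet a y).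
Proof.
  apply fle_antisym.
  - apply fmeet_glb; apply fmeet_mono; (apply fle_refl || apply fmeet_l || apply fmeet_r).
  - apply fmeet_glb; [eapply fle_trans; apply fmeet_l |].
    apply fmeet_mono; apply fmeet_r.
Qed.

Lemma fmeet_top_r x : fmeet x ftop = x.
Proof.
  apply fle_antisym; [apply fmeet_l | apply fmeet_glb; [apply fle_refl | apply ftop_max]].
Qed.

Lemma fbot_le x : fle fbot x.
Proof. apply fsup_lub; intros _ []. Qed.

Lemma fmeet_fsup_le a z P : (forall p, P p -> fle (fmeet a p) z) -> fle (fmeet a (fsup P)) z.
Proof. intros H; rewrite fdistr; apply fsup_lub; intros x [y [Py ->]]; auto. Qed.

End FrameFacts.

Lemma frame_hom_id (F : Frame) : frame_hom (fun x : F => x).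
Proof.
  split; [reflexivity | split; [reflexivity |]]; intros P; apply fsup_ext.
  intros x; split; [intros Px; exists x; auto | intros [y [Py ->]]; exact Py].
Qed.

Lemma frame_hom_comp (F G H : Frame) (phi : F -> G) (psi : G -> H) :
  frame_hom phi -> frame_hom psi -> frame_hom (fun x => psi (phi x)).
Proof.
  intros [phiM [phiT phiS]] [psiM [psiT psiS]]; split; [| split].
  - intros x y; rewrite phiM; apply psiM.
  - rewrite phiT; apply psiT.
  - intros P; rewrite phiS, psiS; apply fsup_ext; intros z; split.
    + intros [y [[x [Px ->]] ->]]; exists x; auto.
    + intros [x [Px ->]]; exists (phi x); split; [exists x |]; auto.
Qed.

Section Subframe.
Variables (F : Frame) (Q : F -> Prop).
Hypotheses (Qtop : Q ftop) (Qmeet : forall x y, Q x -> Q y -> Q (fmeet x y))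
  (Qsup : forall P : F -> Prop, (forall x, P x -> Q x) -> Q (fsup P)).

Definition sub_image (P : {x | Q x} -> Prop) : F -> Prop :=
  fun x => exists p, P p /\ x = proj1_sig p.

Lemma sub_image_sub (P : {x | Q x} -> Prop) x : sub_image P x -> Q x.
Proof. intros [p [_ ->]]; exact (proj2_sig p). Qed.

Lemma sig_eq_proj1 (x y : {x | Q x}) : proj1_sig x = proj1_sig y -> x = y.
Proof. apply eq_sig_hprop; intros; apply proof_irrelevance. Qed.

Definition subframe : Frame.
Proof.
  refine (@Build_Frame {x | Q x}
    (fun x y => fle (proj1_sig x) (proj1_sig y))
    (fun x y => exist _ (fmeet (proj1_sig x) (proj1_sig y))
                  (Qmeet (proj2_sig x) (proj2_sig y)))
    (exist _ ftop Qtop)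
    (fun P => exist _ (fsup (sub_image P)) (Qsup _ (@sub_image_sub P)))
    _ _ _ _ _ _ _ _ _ _); simpl.
  - intros; apply fle_refl.
  - intros x y z; apply fle_trans.
  - intros x y Hxy Hyx; apply sig_eq_proj1, fle_antisym; assumption.
  - intros; apply fmeet_l.
  - intros; apply fmeet_r.
  - intros; apply fmeet_glb; assumption.
  - intros; apply ftop_max.
  - intros P x Px; apply fsup_ub; exists x; auto.
  - intros P z H; apply fsup_lub; intros x [p [Pp ->]]; auto.
  - intros a P; apply sig_eq_proj1; simpl; rewrite fdistr; apply fsup_ext; intros x; split.
    + intros [y [[p [Pp ->]] ->]].
      exists (exist _ (fmeet (proj1_sig a) (proj1_sig p)) (Qmeet (proj2_sig a) (proj2_sig p))).
      split; [exists p |]; auto.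
    + intros [q [[p [Pp ->]] ->]]; exists (proj1_sig p); split; [exists p |]; auto.
Defined.

Lemma proj1_sig_frame_hom : frame_hom (fun x : subframe => proj1_sig x).
Proof.
  split; [reflexivity | split; [reflexivity |]].
  intros P; simpl; apply fsup_ext; intros x; split;
    intros [p [Pp ->]]; exists p; auto.
Qed.

End Subframe.

Section Presentation.
Variables (T : Monad) (F : Frame) (g : T bool -> F).

Lemma is_LB0_endo_id (HLB : is_LB0 g) (psi : F -> F) :
  frame_hom psi -> (forall b, psi (g b) = g b) -> forall x, psi x = x.
Proof.
  destruct HLB as [HR HU]; intros Hpsi Hg x.
  destruct (HU F g HR) as [phi [_ [_ Huniq]]].
  rewrite (Huniq psi Hpsi Hg x); symmetry.
  exact (Huniq _ (frame_hom_id F) (fun b => eq_refl) x).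
Qed.

Section Corestriction.
Variable Q : F -> Prop.
Hypotheses (Qtop : Q ftop) (Qmeet : forall x y, Q x -> Q y -> Q (fmeet x y))
  (Qsup : forall P : F -> Prop, (forall x, P x -> Q x) -> Q (fsup P))
  (Qg : forall b, Q (g b)).

Definition corestrict (b : T bool) : @subframe F Q Qtop Qmeet Qsup := exist Q (g b) (Qg b).

Lemma LB0_relations_corestrict : LB0_relations g -> LB0_relations corestrict.
Proof.
  intros [Rdisj [Rret Rbind]]; split; [| split].
  - intros A t a a' Hne; apply sig_eq_proj1; simpl; rewrite (Rdisj A t a a' Hne).
    apply fsup_ext; intros x; split; [intros [] | intros [p [[] _]]].
  - intros A B t a; apply sig_eq_proj1, Rret.
  - intros A B t u b; apply sig_eq_proj1; simpl; rewrite Rbind; apply fsup_ext.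
    intros x; split.
    + intros [a ->]; eexists; split; [exists a; reflexivity | reflexivity].
    + intros [p [[a ->] ->]]; exists a; reflexivity.
Qed.

End Corestriction.

Lemma is_LB0_ind (HLB : is_LB0 g) (Q : F -> Prop) :
  (forall b, Q (g b)) -> Q ftop ->
  (forall x y, Q x -> Q y -> Q (fmeet x y)) ->
  (forall P : F -> Prop, (forall x, P x -> Q x) -> Q (fsup P)) ->
  forall x, Q x.
Proof.
  intros Qg Qtop Qmeet Qsup x.
  destruct (proj2 HLB _ _ (@LB0_relations_corestrict Q Qtop Qmeet Qsup Qg (proj1 HLB)))
    as [phi [Hphi [Hphig _]]].
  rewrite <- (is_LB0_endo_id HLB (psi := fun x => proj1_sig (phi x))).
  - exact (proj2_sig (phi x)).
  - exact (frame_hom_comp Hphi (@proj1_sig_frame_hom _ _ _ _ _)).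
  - intros b; rewrite Hphig; reflexivity.
Qed.

End Presentation.

Lemma ranked_of_rank_inhabited (T : Monad) (K : Type) : ranked_of_rank T K -> inhabited K.
Proof.
  intros Hrank.
  destruct (Hrank unit (@ret T unit tt)) as [I [_ [_ [[_ HKI] _]]]].
  destruct (classic (inhabited K)) as [HK | HK]; [exact HK | exfalso].
  apply HKI; exists (fun k => False_rect I (HK (inhabits k))).
  intros k; exfalso; exact (HK (inhabits k)).
Qed.

Section TraceEquivalence.
Variables (T : Monad) (K : Type) (F : Frame) (g : T bool -> F).

Lemma sim_chains m n : sim K g m n = fsup (fun x => exists l, x = chain_meet K g m l n).
Proof.
  apply fle_antisym; apply fsup_lub.
  - intros x [[| [| k]] [Hk ->]]; [inversion Hk | |].
    + apply fsup_ub; exists nil; reflexivity.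
    + apply fsup_lub; intros x [l [_ ->]]; apply fsup_ub; exists l; reflexivity.
  - intros x [l ->].
    eapply fle_trans;
      [| apply fsup_ub; exists (S (S (length l))); split; [auto with arith | reflexivity]].
    apply fsup_ub; exists l; simpl; rewrite PeanoNat.Nat.sub_0_r; auto.
Qed.

Lemma chain_meet_app l1 l2 m x n :
  fle (fmeet (chain_meet K g m l1 x) (chain_meet K g x l2 n))
      (chain_meet K g m (l1 ++ x :: l2) n).
Proof.
  revert m; induction l1 as [| y l1 IH]; intros m; simpl; [apply fle_refl |].
  rewrite <- fmeet_assoc; apply fmeet_mono; [apply fle_refl | apply IH].
Qed.

Lemma sim1_sym m n : fle (sim1 K g m n) (sim1 K g n m).
Proof.
  apply fsup_lub; intros x [A [t [u [u' [a [HA [Hu [Hm [Hn ->]]]]]]]]].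
  apply fsup_ub; exists A, t, u', u, a; auto 10.
Qed.

Lemma chain_meet_rev l m n : fle (chain_meet K g m l n) (chain_meet K g n (rev l) m).
Proof.
  revert m; induction l as [| x l IH]; intros m; simpl; [apply sim1_sym |].
  eapply fle_trans; [| apply chain_meet_app]; rewrite fmeet_comm.
  apply fmeet_mono; [apply IH | apply sim1_sym].
Qed.

Lemma sim_sym m n : fle (sim K g m n) (sim K g n m).
Proof.
  rewrite !sim_chains; apply fsup_lub; intros x [l ->]; apply fsup_ub; exists (rev l).
  apply fle_antisym; [apply chain_meet_rev |].
  rewrite <- (rev_involutive l) at 2; apply chain_meet_rev.
Qed.

Lemma sim_trans m x n : fle (fmeet (sim K g m x) (sim K g x n)) (sim K g m n).
Proof.
  rewrite !sim_chains; apply fmeet_fsup_le; intros p [l1 ->].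
  rewrite fmeet_comm; apply fmeet_fsup_le; intros q [l2 ->]; rewrite fmeet_comm.
  eapply fle_trans; [apply chain_meet_app | apply fsup_ub; eexists; reflexivity].
Qed.

Lemma sim1_le_sim m n : fle (sim1 K g m n) (sim K g m n).
Proof. apply fsup_ub; exists 1; auto. Qed.

Lemma isLB1_const c : isLB1 K g (const c).
Proof. intros b m1 m2 _ _; reflexivity. Qed.

Lemma isLB1_meet1 v1 v2 : isLB1 K g v1 -> isLB1 K g v2 -> isLB1 K g (meet1 v1 v2).
Proof.
  intros H1 H2 b m1 m2 Hb Hsim; unfold meet1.
  rewrite 2!(@fmeet_meetDl _ b), (H1 b m1 m2 Hb Hsim), (H2 b m1 m2 Hb Hsim); reflexivity.
Qed.

Lemma isLB1_hat m : isLB1 K g (hat K g m).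
Proof.
  intros b m1 m2 _ [_ Hb]; unfold hat.
  assert (Hstep : forall n1 n2, fle b (sim K g n1 n2) ->
            fle (fmeet b (sim K g m n1)) (fmeet b (sim K g m n2))).
  { intros n1 n2 Hb'; apply fmeet_glb; [apply fmeet_l |].
    eapply fle_trans; [| apply (sim_trans m n1 n2)].
    rewrite fmeet_comm; apply fmeet_mono; [apply fle_refl | exact Hb']. }
  apply fle_antisym; apply Hstep; [exact Hb |].
  eapply fle_trans; [exact Hb | apply sim_sym].
Qed.

Lemma is_join1_meet_const_fsup v (P : F -> Prop) :
  isLB1 K g v ->
  is_join1 K g (fun u => exists c, P c /\ u = meet1 v (const c)) (meet1 v (const (fsup P))).
Proof.
  intros Hv; split; [apply isLB1_meet1; [exact Hv | apply isLB1_const] | split].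
  - intros u [c [Pc ->]] n; apply fmeet_mono; [apply fle_refl | apply fsup_ub, Pc].
  - intros u _ Hub n; apply fmeet_fsup_le; intros c Pc.
    exact (Hub _ (ex_intro _ c (conj Pc eq_refl)) n).
Qed.

Hypothesis HR : LB0_relations g.

Lemma g_maps_to_ret (B : Type) (a : B) : g (maps_to (ret a) a) = ftop.
Proof.
  destruct HR as [_ [Rret _]].
  rewrite <- (Rret unit B (ret tt) a); unfold then_; rewrite bind_ret_l; reflexivity.
Qed.

Lemma maps_to_complemented (A : Type) (t : T A) (a : A) : complemented (g (maps_to t a)).
Proof.
  destruct HR as [Rdisj [Rret Rbind]].
  exists (fsup (fun x => exists a', a' <> a /\ x = g (maps_to t a'))); split.
  - apply fle_antisym; [| apply fbot_le]; apply fmeet_fsup_le; intros p [a' [Hne ->]].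
    rewrite (Rdisj A t a a' (not_eq_sym Hne)); apply fle_refl.
  - apply fle_antisym; [apply ftop_max |].
    rewrite <- (Rret A unit t tt); unfold then_.
    rewrite (Rbind A unit t (fun _ => ret tt) tt).
    apply fsup_lub; intros x [a0 ->]; eapply fle_trans; [apply fmeet_l |].
    destruct (classic (a0 = a)) as [-> | Hne].
    + apply fsup_ub; left; reflexivity.
    + eapply fle_trans; [| apply fsup_ub; right; reflexivity]; apply fsup_ub; eauto.
Qed.

Lemma sim_refl (k0 : K) n : sim K g n n = ftop.
Proof.
  apply fle_antisym; [apply ftop_max |].
  eapply fle_trans; [| apply sim1_le_sim].
  rewrite <- (g_maps_to_ret tt); apply fsup_ub.
  exists unit, (ret tt), (fun _ => n), (fun _ => n), tt.
  rewrite bind_ret_l; split; [exists (fun _ => k0); intros [] [] _; reflexivity | auto].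
Qed.

Section Transport.
Variable w : T unit -> F.
Hypothesis Hw : isLB1 K g w.

Lemma sim1_transport m n : fle (fmeet (sim1 K g m n) (w m)) (w n).
Proof.
  rewrite fmeet_comm; apply fmeet_fsup_le.
  intros p [A [t [u [u' [a [HA [Hu [Hm [Hn ->]]]]]]]]].
  rewrite fmeet_comm, (Hw (maps_to_complemented t a) (m1 := m) (m2 := n)); [apply fmeet_r |].
  split; [apply maps_to_complemented |].
  eapply fle_trans; [| apply sim1_le_sim]; apply fsup_ub.
  exists A, t, u, u', a; auto 10.
Qed.

Lemma chain_meet_transport l m n : fle (fmeet (chain_meet K g m l n) (w m)) (w n).
Proof.
  revert m; induction l as [| x l IH]; intros m; simpl; [apply sim1_transport |].
  eapply fle_trans; [| apply (IH x)]; apply fmeet_glb.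
  - eapply fle_trans; [apply fmeet_l | apply fmeet_r].
  - eapply fle_trans; [| apply (sim1_transport m x)].
    apply fmeet_mono; [apply fmeet_l | apply fle_refl].
Qed.

Lemma sim_transport m n : fle (fmeet (sim K g m n) (w m)) (w n).
Proof.
  rewrite sim_chains, fmeet_comm; apply fmeet_fsup_le; intros p [l ->].
  rewrite fmeet_comm; apply chain_meet_transport.
Qed.

Lemma is_join1_hat_meet_const (k0 : K) :
  is_join1 K g (fun v => exists m, v = meet1 (hat K g m) (const (w m))) w.
Proof.
  split; [exact Hw | split].
  - intros v [m ->] n; apply sim_transport.
  - intros u _ Hub n; eapply fle_trans; [| apply (Hub _ (ex_intro _ n eq_refl) n)].
    unfold meet1, hat, const; rewrite (sim_refl k0), fmeet_comm, fmeet_top_r.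
    apply fle_refl.
Qed.

End Transport.

End TraceEquivalence.

Lemma generates1_gen1 (T : Monad) (K : Type) (F : Frame) (g : T bool -> F) :
  is_LB0 g -> K -> generates1 K g (fun v => exists m b, v = gen1 K g m b).
Proof.
  intros HLB k0 S Hgen _ Hmeet Hsup w Hw.
  assert (Hhat_const : forall c m, S (meet1 (hat K g m) (const c))).
  { apply (is_LB0_ind HLB (fun c => forall m, S (meet1 (hat K g m) (const c)))).
    - intros b m; apply Hgen; exists m, b; reflexivity.
    - intros m; rewrite <- (g_maps_to_ret (proj1 HLB) tt); apply Hgen.
      exists m, (maps_to (ret tt) tt); reflexivity.
    - intros x y Hx Hy m.
      replace (meet1 (hat K g m) (const (fmeet x y)))
        with (meet1 (meet1 (hat K g m) (const x)) (meet1 (hat K g m) (const y)))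
        by (apply functional_extensionality; intros n; symmetry; apply fmeet_meetDl).
      apply Hmeet; auto; apply isLB1_meet1; apply isLB1_hat || apply isLB1_const.
    - intros P HP m.
      refine (Hsup _ _ _ (is_join1_meet_const_fsup P (isLB1_hat (K := K) (g := g) m))).
      intros v [c [Pc ->]]; split; [apply isLB1_meet1; [apply isLB1_hat | apply isLB1_const] |].
      apply HP, Pc. }
  refine (Hsup _ w _ (is_join1_hat_meet_const (proj1 HLB) Hw k0)).
  intros v [m ->]; split; [apply isLB1_meet1; [apply isLB1_hat | apply isLB1_const] |].
  apply Hhat_const.
Qed.

Theorem lemma3p12 (T : Monad) (K : Type) (F : Frame) (g : T bool -> F) :
  ranked_of_rank T K -> is_LB0 g ->
  (forall w : T unit -> F, isLB1 K g w ->
     (forall m : T unit, isLB1 K g (hat K g m)) /\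
     (forall m : T unit, isLB1 K g (meet1 (hat K g m) (const (w m)))) /\
     is_join1 K g (fun v => exists m : T unit, v = meet1 (hat K g m) (const (w m))) w) /\
  (forall (m : T unit) (b : T bool), isLB1 K g (gen1 K g m b)) /\
  generates1 K g (fun v => exists (m : T unit) (b : T bool), v = gen1 K g m b).
Proof.
  intros Hrank HLB.
  destruct (ranked_of_rank_inhabited Hrank) as [k0].
  assert (Hhat_const : forall m c, isLB1 K g (meet1 (hat K g m) (const c)))
    by (intros; apply isLB1_meet1; [apply isLB1_hat | apply isLB1_const]).
  split; [| split].
  - intros w Hw; split; [apply isLB1_hat | split; [intros; apply Hhat_const |]].
    exact (is_join1_hat_meet_const (proj1 HLB) Hw k0).
  - intros; apply Hhat_const.
  - exact (generates1_gen1 HLB k0).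
Qed.
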